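(* Let $H$ be a complex Hilbert space, $A,B\in\mathbb{B}(H)$, $t\in[0,1]$, and let $\varphi,\psi,\varphi_1,\varphi_2,\psi_1,\psi_2:[0,1]\to\mathbb{R}$ be continuous. Then: (1) $\omega_t(0,\psi;A)=|\psi(t)|\,\omega(A)$ and $c_t(0,\psi;A)=|\psi(t)|\,c(A)$; (2) $\omega_t(\varphi,0;A)=|\varphi(t)|\,\omega(A)$ and $c_t(\varphi,0;A)=|\varphi(t)|\,c(A)$; (3) $\omega_t(1,1;A)=2\|\operatorname{Re}A\|$ and $c_t(1,1;A)=2c(\operatorname{Re}A)$; (4) $\omega_t(1,-1;A)=2\|\operatorname{Im}A\|$ and $c_t(1,-1;A)=2c(\operatorname{Im}A)$; (5) $\omega_t(\varphi,\psi;iA)=\omega_t(\varphi,-\psi;A)$; (6) $\frac12\|A\|_t\le\omega_t(\varphi,\psi;A)\le\|A\|_t$; (7) $\omega_t(\varphi,\psi;A)\le(|\varphi(t)|+|\psi(t)|)\,\omega(A)$ and $c_t(\varphi,\psi;A)\ge\big||\varphi(t)|-|\psi(t)|\big|\,c(A)$; (8) $\omega_t(\varphi,\varphi;A)=2|\varphi(t)|\,\omega(\operatorname{Re}A)=2|\varphi(t)|\,\|\operatorname{Re}A\|$; (9) $\omega_t(\psi,\psi;A)=2|\psi(t)|\,\omega(\operatorname{Re}A)=2|\psi(t)|\,\|\operatorname{Re}A\|$; (10) if $A=A^*$, then $\omega_t(\varphi,\psi;A)=|\varphi(t)+\psi(t)|\,\omega(A)=|\varphi(t)+\psi(t)|\,\|A\|$;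 (11) $\omega_t(\varphi,\psi;A)=\omega_t(\psi,\varphi;A^* )$; (12) if $A=A^*$, then $\omega_t(\varphi,\psi;A)=\omega_t(\psi,\varphi;A)$; (13) $\omega_t(\varphi,\psi;A+B)\le\omega_t(\varphi,\psi;A)+\omega_t(\varphi,\psi;B)$; (14) $c_t(\varphi,\psi;A+B)\le\omega_t(\varphi,\psi;A)+c_t(\varphi,\psi;B)$; (15) $\omega_t(\varphi,\psi;AB)\le(|\varphi(t)|+|\psi(t)|)\,\omega(AB)$; (16) $c_t(\varphi,\psi;AB)\le|\varphi(t)|\,c(AB)+|\psi(t)|\,\omega(AB)$; (17) $\|\varphi(t)AB+\psi(t)(AB)^*\|^2\le(|\varphi(t)|^2+|\psi(t)|^2)\|AB\|^2+|\varphi(t)\psi(t)|\,\omega((AB)^2)+|\varphi(t)\psi(t)|\,\omega((B^*A^* )^2)$; (18) $\omega_t(\varphi_1+\varphi_2,\psi_1+\psi_2;A)\le\omega_t(\varphi_1,\psi_1;A)+\omega_t(\varphi_2,\psi_2;A)$; (19) $c_t(\varphi,\psi;A)\ge\min\{|\varphi(t)+\psi(t)|,|\varphi(t)-\psi(t)|\}\,m(A)$, where $m(A)=\inf_{x\in S_1(H)}|\langle Ax,x\rangle|$.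
   Context: $\mathbb{B}(H)$ is the algebra of bounded linear operators on $H$, $S_1(H)=\{x\in H:\|x\|=1\}$. For $A\in\mathbb{B}(H)$: $\omega(A)=\sup_{x\in S_1(H)}|\langle Ax,x\rangle|$ (numerical radius), $c(A)=\inf_{x\in S_1(H)}|\langle Ax,x\rangle|$ (Crawford number), $\operatorname{Re}A=(A+A^* )/2$, $\operatorname{Im}A=(A-A^* )/(2i)$. For real-valued functions $\varphi,\psi$ on $[0,1]$ and $t\in[0,1]$: the weighted numerical radius $\omega_t(\varphi,\psi;A)=\sup_{x\in S_1(H)}|\langle(\varphi(t)A+\psi(t)A^* )x,x\rangle|$, the weighted Crawford number $c_t(\varphi,\psi;A)=\inf_{x\in S_1(H)}|\langle(\varphi(t)A+\psi(t)A^* )x,x\rangle|$, and the weighted norm $\|A\|_t=\|\varphi(t)A+\psi(t)A^*\|$. Numbers such as $0,1,-1$ in the weight slots denote constant functions. *)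

From HB Require Import structures.
From mathcomp Require Import all_boot all_order all_algebra.
From mathcomp Require Import complex.
From mathcomp Require Import all_classical all_reals all_analysis.
Set Implicit Arguments. Unset Strict Implicit. Unset Printing Implicit Defensive.
Import Order.TTheory GRing.Theory Num.Theory.
Import numFieldNormedType.Exports.
Local Open Scope ring_scope.
Local Open Scope complex_scope.
Local Open Scope classical_set_scope.

Section Hilbert.
Variable R : realType.
Variable H : lmodType R[i].
Variable ip : H -> H -> R[i].   (* inner product <x, y>, linear in x *)

Definition cabs (z : R[i]) : R := @Normc.normc R z.

Definition RtoC (r : R) : R[i] := r%:C.

Definition inner_product : Prop :=
  [/\ (forall (a : R[i]) (x y z : H), ip (a *: x + y) z = a * ip x z + ip y z),
      (forall x y : H, ip y x = (ip x y)^*),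
      (forall x : H, 0 <= ip x x) &
      (forall x : H, ip x x = 0 -> x = 0)].

Definition hnorm (x : H) : R := Num.sqrt (@complex.Re R (ip x x)).

Definition complete_ip : Prop :=
  forall u : nat -> H,
    (forall e : R, 0 < e -> exists N : nat, forall m n : nat,
        (N <= m)%N -> (N <= n)%N -> hnorm (u m - u n) < e) ->
    exists l : H, forall e : R, 0 < e -> exists N : nat, forall n : nat,
        (N <= n)%N -> hnorm (u n - l) < e.

Definition hilbert_space : Prop := inner_product /\ complete_ip.

Definition bounded_op (A : H -> H) : Prop :=
  (forall (a : R[i]) (x y : H), A (a *: x + y) = a *: A x + A y) /\
  exists M : R, forall x : H, hnorm (A x) <= M * hnorm x.

Definition is_adjoint (A As : H -> H) : Prop :=
  forall x y : H, ip (A x) y = ip x (As y).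

Definition adj (A : H -> H) : H -> H :=
  fun y => xget 0 [set z | forall x : H, ip (A x) y = ip x z].

Definition sphere1 : set H := [set x | hnorm x = 1].

Definition numrad (A : H -> H) : R :=
  sup [set cabs (ip (A x) x) | x in sphere1].
Definition crawford (A : H -> H) : R :=
  inf [set cabs (ip (A x) x) | x in sphere1].
Definition opnorm (A : H -> H) : R :=
  sup [set hnorm (A x) | x in sphere1].

Definition opadd (A B : H -> H) : H -> H := fun x => A x + B x.
Definition opscale (a : R[i]) (A : H -> H) : H -> H := fun x => a *: A x.
Definition opmul (A B : H -> H) : H -> H := fun x => A (B x).

Definition ReOp (A : H -> H) : H -> H :=
  fun x => (2 : R[i])^-1 *: (A x + adj A x).
Definition ImOp (A : H -> H) : H -> H :=
  fun x => (2 * 'i : R[i])^-1 *: (A x - adj A x).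

Definition wop (phi psi : R -> R) (t : R) (A : H -> H) : H -> H :=
  fun x => RtoC (phi t) *: A x + RtoC (psi t) *: adj A x.

Definition wnumrad phi psi t A : R := numrad (wop phi psi t A).
Definition wcrawford phi psi t A : R := crawford (wop phi psi t A).
Definition wnorm phi psi t A : R := opnorm (wop phi psi t A).

End Hilbert.

Definition cstw (R : realType) (c : R) : R -> R := fun _ => c.
Definition addw (R : realType) (f g : R -> R) : R -> R := fun s => f s + g s.
Definition oppw (R : realType) (f : R -> R) : R -> R := fun s => - f s.

Definition cont01 (R : realType) (f : R -> R) : Prop :=
  {within `[(0:R), (1:R)]%classic, continuous f}.

From HB Require Import structures.
From mathcomp Require Import all_boot all_order all_algebra.
From mathcomp Require Import complex.
From mathcomp Require Import all_classical all_reals all_analysis.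
From mathcomp Require Import ring lra.
Set Implicit Arguments. Unset Strict Implicit. Unset Printing Implicit Defensive.
Import Order.TTheory GRing.Theory Num.Theory.
Import numFieldNormedType.Exports.
Local Open Scope ring_scope.
Local Open Scope complex_scope.

(* On the unit sphere, [<(phi A + psi A^* ) x, x> = phi z + psi (conj z)] with [z = <A x, x>],
   and [|phi z + psi (conj z)|^2 = (phi + psi)^2 (Re z)^2 + (phi - psi)^2 (Im z)^2].
   Most items are therefore pointwise facts about this modulus, carried through sup and inf.
   The comparisons with operator norms come from polarization: [4 <T x, y>] is a combination
   of four values [<T u, u>] whose [|u|^2] add up to [4 (|x|^2 + |y|^2)], so [||T|| <= 2 w(T)];
   for self-adjoint [T] two real terms suffice and [||T|| = w(T)].  Item (17) expands
   [|phi T x + psi T^* x|^2] using [<T x, T^* x> = <T^2 x, x>] and [w((T^* )^2) = w(T^2)]. *)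

Section SupInfImage.
Local Open Scope classical_set_scope.
Variables (R : realType) (T : Type) (S : set T).
Implicit Types (f g h : T -> R) (a b c : R).

(* [sup] and [inf] of an empty or unbounded set are [0]: hence the sign conditions below. *)

Lemma image_set0 f : ~ (S !=set0) -> f @` S = set0.
Proof. by move=> S0; apply/seteqP; split=> // y [x Sx _]; apply: S0; exists x. Qed.

Lemma sup_img_ub f x : has_ubound (f @` S) -> S x -> f x <= sup (f @` S).
Proof. by move=> fS Sx; apply: ub_le_sup => //; exists x. Qed.

Lemma sup_img_le f c : 0 <= c -> (forall x, S x -> f x <= c) -> sup (f @` S) <= c.
Proof.
move=> c0 fc; have [[x Sx]|S0] := pselect (S !=set0); last by rewrite image_set0 ?sup0.
by apply: ge_sup; [exists (f x), x | move=> _ [y Sy <-]; apply: fc].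
Qed.

Lemma sup_img_ge0 f : (forall x, S x -> 0 <= f x) -> 0 <= sup (f @` S).
Proof.
move=> f0; have [[x Sx]|S0] := pselect (S !=set0); last by rewrite image_set0 ?sup0.
have [fS|fSn] := pselect (has_ubound (f @` S)).
  exact: le_trans (f0 x Sx) (sup_img_ub fS Sx).
by rewrite sup_out // => -[].
Qed.

Lemma le_sup_img f g : has_ubound (g @` S) -> (forall x, S x -> f x <= g x) ->
  sup (f @` S) <= sup (g @` S).
Proof.
move=> gS fg; have [[x Sx]|S0] := pselect (S !=set0); last by rewrite !image_set0.
by apply: ge_sup; [exists (f x), x | move=> _ [y Sy <-]; rewrite (le_trans (fg y Sy)) ?sup_img_ub].
Qed.

Lemma has_ubound_img_le f g : has_ubound (g @` S) -> (forall x, S x -> f x <= g x) ->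
  has_ubound (f @` S).
Proof.
move=> [M gM] fg; exists M => _ [x Sx <-].
by apply: le_trans (fg x Sx) _; apply: gM; exists x.
Qed.

Lemma sup_img_scale f c : 0 <= c -> has_ubound (f @` S) -> (forall x, S x -> 0 <= f x) ->
  sup ((fun x => c * f x) @` S) = c * sup (f @` S).
Proof.
move=> c0 fS f0; apply/eqP; rewrite eq_le; apply/andP; split.
  apply: sup_img_le => [|x Sx]; first by rewrite mulr_ge0 ?sup_img_ge0.
  by rewrite ler_wpM2l ?sup_img_ub.
have [->|cn0] := eqVneq c 0; first by rewrite mul0r sup_img_ge0 // => x _; rewrite mul0r.
have cp : 0 < c by rewrite lt_def cn0.
have cfS : has_ubound ((fun x => c * f x) @` S).
  by case: fS => M fM; exists (c * M) => _ [x Sx <-]; rewrite ler_wpM2l ?fM //; exists x.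
rewrite -ler_pdivlMl //; apply: sup_img_le => [|x Sx].
  by rewrite mulr_ge0 ?invr_ge0 ?sup_img_ge0 // => x Sx; rewrite mulr_ge0 ?f0.
by rewrite ler_pdivlMl // (sup_img_ub cfS).
Qed.

Lemma sup_img_add f g h : has_ubound (f @` S) -> has_ubound (g @` S) ->
  (forall x, S x -> h x <= f x + g x) ->
  sup (h @` S) <= sup (f @` S) + sup (g @` S).
Proof.
move=> fS gS hfg; have [[x Sx]|S0] := pselect (S !=set0); last by rewrite !image_set0 ?sup0 ?addr0.
apply: ge_sup; first by exists (h x), x.
by move=> _ [y Sy <-]; rewrite (le_trans (hfg y Sy)) ?lerD ?sup_img_ub.
Qed.

Lemma inf_img_lb f x : (forall y, S y -> 0 <= f y) -> S x -> inf (f @` S) <= f x.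
Proof. by move=> f0 Sx; apply: ge_inf; [exists 0 => _ [y Sy <-]; apply: f0 | exists x]. Qed.

Lemma inf_img_ge0 f : (forall x, S x -> 0 <= f x) -> 0 <= inf (f @` S).
Proof.
move=> f0; have [[x Sx]|S0] := pselect (S !=set0); last by rewrite image_set0 ?inf0.
by apply: lb_le_inf; [exists (f x), x | move=> _ [y Sy <-]; apply: f0].
Qed.

Lemma inf_img_le_affine f g a b : 0 <= a -> 0 <= b ->
  (forall x, S x -> 0 <= g x) -> (forall x, S x -> 0 <= f x <= a * g x + b) ->
  inf (f @` S) <= a * inf (g @` S) + b.
Proof.
move=> a0 b0 g0 fg; have f0 x : S x -> 0 <= f x by move=> /fg /andP[].
have [[x Sx]|S0] := pselect (S !=set0); last by rewrite !image_set0 ?inf0 ?mulr0 ?add0r.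
have [a0'|an0] := eqVneq a 0.
  subst a; rewrite mul0r add0r (le_trans (inf_img_lb f0 Sx)) //.
  by have /andP[_] := fg x Sx; rewrite mul0r add0r.
have ap : 0 < a by rewrite lt_def an0.
rewrite -lerBlDr -ler_pdivrMl //; apply: lb_le_inf; first by exists (g x), x.
move=> _ [y Sy <-]; rewrite ler_pdivrMl // lerBlDr.
by apply: le_trans (inf_img_lb f0 Sy) _; have /andP[] := fg y Sy.
Qed.

Lemma le_inf_img f g : (forall x, S x -> 0 <= f x <= g x) -> inf (f @` S) <= inf (g @` S).
Proof.
move=> fg; have := @inf_img_le_affine f g 1 0 ler01 (lexx 0).
rewrite mul1r addr0; apply=> [x /fg /andP[f0 /(le_trans f0)]//|x Sx].
by rewrite mul1r addr0 fg.
Qed.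

Lemma inf_img_scale f c : 0 <= c -> (forall x, S x -> 0 <= f x) ->
  inf ((fun x => c * f x) @` S) = c * inf (f @` S).
Proof.
move=> c0 f0; apply/eqP; rewrite eq_le; apply/andP; split.
  by rewrite -[leRHS]addr0 inf_img_le_affine // => x Sx; rewrite addr0 mulr_ge0 ?f0 /=.
have [[x Sx]|S0] := pselect (S !=set0); last by rewrite !image_set0 ?inf0 ?mulr0.
by apply: lb_le_inf; [exists (c * f x), x | move=> _ [y Sy <-]; rewrite ler_wpM2l ?inf_img_lb].
Qed.

End SupInfImage.

Section ComplexModulus.
Variable R : realType.
Implicit Types (z u : R[i]) (r w v : R).
Local Notation Re := (@complex.Re R).
Local Notation Im := (@complex.Im R).

Lemma cabs_ge0 z : 0 <= cabs z.
Proof. by case: z => a b; apply: sqrtr_ge0. Qed.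

Lemma cabs_sqr z : cabs z ^+ 2 = Re z ^+ 2 + Im z ^+ 2.
Proof. by case: z => a b; rewrite /cabs /= sqr_sqrtr // addr_ge0 ?sqr_ge0. Qed.

Lemma cabsM z u : cabs (z * u) = cabs z * cabs u.
Proof. exact: Normc.normcM. Qed.

Lemma ler_cabsD z u : cabs (z + u) <= cabs z + cabs u.
Proof. exact: le_normcD. Qed.

Lemma cabsN z : cabs (- z) = cabs z.
Proof. exact: normcN. Qed.

Lemma ler_cabsB z u : cabs (z - u) <= cabs z + cabs u.
Proof. by rewrite -(cabsN u) ler_cabsD. Qed.

Lemma cabsJ z : cabs (conjc z) = cabs z.
Proof. by case: z => a b; rewrite /cabs /= sqrrN. Qed.

Lemma cabs0 : cabs 0 = 0 :> R.
Proof. exact: Normc.normc0. Qed.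

Lemma cabsR r : cabs r%:C = `|r|.
Proof. by rewrite /cabs /= expr0n addr0 sqrtr_sqr. Qed.

Lemma cabs_nat n : cabs n%:R = n%:R :> R.
Proof. by rewrite -(rmorph_nat (real_complex R)) cabsR normr_nat. Qed.

Lemma cabs_i : cabs 'i%C = 1 :> R.
Proof. by rewrite /cabs /= expr0n expr1n add0r sqrtr1. Qed.

Lemma ler_normRe_cabs z : `|Re z| <= cabs z.
Proof.
by rewrite -ler_sqr ?nnegrE ?cabs_ge0 // cabs_sqr real_normK ?num_real // lerDl sqr_ge0.
Qed.

Lemma conjcN1 : conjc (-1) = -1 :> R[i].
Proof. exact: rmorphN1. Qed.

Lemma conjc2 : conjc 2 = 2 :> R[i].
Proof. exact: rmorph_nat. Qed.

(* ['i%C] is [0 +i* 1]; a bare ['i] may also parse as the convertible [Num.imaginary]. *)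
Lemma conjci : conjc 'i%C = - 'i%C :> R[i].
Proof. by apply/eqP; rewrite eq_complex /= oppr0 !eqxx. Qed.

Lemma conjcNi : conjc (- 'i%C) = 'i%C :> R[i].
Proof. by apply/eqP; rewrite eq_complex /= !oppr0 opprK !eqxx. Qed.

Lemma conjc_inv2i : conjc (2 * 'i%C)^-1 = - (2 * 'i%C)^-1 :> R[i].
Proof.
have cM : conjc (2 * 'i%C) = conjc 2 * conjc 'i%C :> R[i] by exact: rmorphM.
by rewrite conjc_inv cM conjc2 conjci mulrN invrN.
Qed.

Lemma polarization_identity (P Q U V : R[i]) :
  let f a := P + conjc a * Q + a * U + a * conjc a * V in
  4 * Q = f 1 - f (-1) + 'i%C * (f 'i%C - f (- 'i%C)).
Proof.
have i2 : 'i%C * 'i%C = -1 :> R[i] by rewrite -expr2 sqr_i.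
by move=> f; rewrite /f conjc1 conjcN1 conjci conjcNi; ring: i2.
Qed.

Lemma polarization_identity_re (P Q V : R[i]) :
  let f a := P + conjc a * Q + a * conjc Q + a * conjc a * V in
  f 1 - f (-1) = 4 * (Re Q)%:C.
Proof.
move=> f; rewrite /f conjc1 conjcN1; transitivity (2 * (Q + conjc Q)); first by ring.
by rewrite addcJ; ring.
Qed.

(* The modulus of [<(w A + v A^* ) x, x>], as a function of [z = <A x, x>]. *)
Definition wabs w v z : R := cabs (w%:C * z + v%:C * conjc z).

Lemma wabs_ge0 w v z : 0 <= wabs w v z.
Proof. exact: cabs_ge0. Qed.

Lemma wabs_sqr w v z :
  wabs w v z ^+ 2 = (w + v) ^+ 2 * Re z ^+ 2 + (w - v) ^+ 2 * Im z ^+ 2.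
Proof. by rewrite /wabs cabs_sqr; case: z => a b /=; ring. Qed.

Lemma wabs0l v z : wabs 0 v z = `|v| * cabs z.
Proof. by rewrite /wabs mul0r add0r cabsM cabsR cabsJ. Qed.

Lemma wabs0r w z : wabs w 0 z = `|w| * cabs z.
Proof. by rewrite /wabs mul0r addr0 cabsM cabsR. Qed.

Lemma wabs_real w v z : conjc z = z -> wabs w v z = `|w + v| * cabs z.
Proof. by move=> zJ; rewrite /wabs zJ -mulrDl -rmorphD cabsM cabsR. Qed.

Lemma wabs_eq_of_sqr w v z r : 0 <= r ->
  (w + v) ^+ 2 * Re z ^+ 2 + (w - v) ^+ 2 * Im z ^+ 2 = r ^+ 2 -> wabs w v z = r.
Proof.
by move=> r0 e; apply: (pexpIrn (isT : (0 < 2)%N)); rewrite ?nnegrE ?wabs_ge0 // wabs_sqr.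
Qed.

Lemma wabs_diag w z : wabs w w z = 2 * `|w| * `|Re z|.
Proof.
apply: wabs_eq_of_sqr; first by rewrite !mulr_ge0.
by rewrite subrr expr0n mul0r addr0 !exprMn !real_normK ?num_real //; ring.
Qed.

Lemma wabs1N1 z : wabs 1 (-1) z = 2 * `|Im z|.
Proof.
apply: wabs_eq_of_sqr; first by rewrite mulr_ge0.
by rewrite subrr expr0n mul0r add0r exprMn real_normK ?num_real // opprK.
Qed.

Lemma wabs_muli w v z : wabs w v ('i%C * z) = wabs w (- v) z.
Proof.
apply: wabs_eq_of_sqr; first exact: wabs_ge0.
by rewrite wabs_sqr opprK; case: z => a b /=; ring.
Qed.

Lemma wabs_conj w v z : wabs v w (conjc z) = wabs w v z.
Proof.
apply: wabs_eq_of_sqr; first exact: wabs_ge0.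
by rewrite wabs_sqr; case: z => a b /=; ring.
Qed.

Lemma wabs_le w v z : wabs w v z <= (`|w| + `|v|) * cabs z.
Proof. by rewrite (le_trans (ler_cabsD _ _)) // !cabsM !cabsR cabsJ mulrDl. Qed.

Lemma wabs_ge_min w v z : Num.min `|w + v| `|w - v| * cabs z <= wabs w v z.
Proof.
set c := Num.min _ _; have c0 : 0 <= c by rewrite le_min !normr_ge0.
rewrite -ler_sqr ?nnegrE ?mulr_ge0 ?cabs_ge0 ?wabs_ge0 // exprMn cabs_sqr wabs_sqr mulrDr.
have le_c2 x : `|x| >= c -> c ^+ 2 <= x ^+ 2.
  by move=> cx; rewrite -real_normK ?num_real // ler_sqr ?nnegrE.
by rewrite lerD // ler_wpM2r ?sqr_ge0 ?le_c2 // ge_min lexx ?orbT.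
Qed.

Lemma wabsDr w v z u : wabs w v (z + u) <= wabs w v z + wabs w v u.
Proof.
by rewrite /wabs rmorphD /= (le_trans _ (ler_cabsD _ _)) // mulrDr mulrDr addrACA.
Qed.

Lemma wabsDw w1 w2 v1 v2 z : wabs (w1 + w2) (v1 + v2) z <= wabs w1 v1 z + wabs w2 v2 z.
Proof.
by rewrite /wabs !rmorphD /= (le_trans _ (ler_cabsD _ _)) // !mulrDl addrACA.
Qed.

End ComplexModulus.

Section InnerProduct.
Variables (R : realType) (H : lmodType R[i]) (ip : H -> H -> R[i]).
Hypothesis ipP : inner_product ip.
Implicit Types (x y z : H) (a : R[i]).
Local Notation Re := (@complex.Re R).

Lemma ipDl x y z : ip (x + y) z = ip x z + ip y z.
Proof. by case: ipP => ipl _ _ _; rewrite -[x]scale1r ipl mul1r scale1r. Qed.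

Lemma ip0l z : ip 0 z = 0.
Proof. by apply/eqP; rewrite -[X in X == _](addrK (ip 0 z)) -ipDl addr0 subrr. Qed.

Lemma ipZl a x z : ip (a *: x) z = a * ip x z.
Proof. by case: ipP => ipl _ _ _; rewrite -[a *: x]addr0 ipl ip0l addr0. Qed.

Lemma ipNl x z : ip (- x) z = - ip x z.
Proof. by rewrite -scaleN1r ipZl mulN1r. Qed.

Lemma ipBl x y z : ip (x - y) z = ip x z - ip y z.
Proof. by rewrite ipDl ipNl. Qed.

Lemma ipC x y : ip y x = conjc (ip x y).
Proof. by case: ipP. Qed.

Lemma ipDr x y z : ip z (x + y) = ip z x + ip z y.
Proof. by rewrite ipC ipDl rmorphD /= -!ipC. Qed.

Lemma ipZr a x z : ip z (a *: x) = conjc a * ip z x.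
Proof. by rewrite ipC ipZl rmorphM /= -ipC. Qed.

Lemma ip0r z : ip z 0 = 0.
Proof. by rewrite ipC ip0l rmorph0. Qed.

Lemma ipNr x z : ip z (- x) = - ip z x.
Proof. by rewrite ipC ipNl rmorphN /= -ipC. Qed.

Lemma ipBr x y z : ip z (x - y) = ip z x - ip z y.
Proof. by rewrite ipDr ipNr. Qed.

Lemma ip_ext y y' : (forall x, ip x y = ip x y') -> y = y'.
Proof.
case: ipP => _ _ _ ip_eq0 eq_yy'; apply/eqP; rewrite -subr_eq0; apply/eqP.
by apply: ip_eq0; rewrite ipBr eq_yy' subrr.
Qed.

Lemma hnorm_ge0 x : 0 <= hnorm ip x.
Proof. exact: sqrtr_ge0. Qed.

Lemma ip_self x : ip x x = (hnorm ip x ^+ 2)%:C.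
Proof.
case: ipP => _ _ ip_ge0 _; have := ip_ge0 x; rewrite /hnorm lecE /=.
by case: (ip x x) => a b /= /andP[/eqP-> a0]; rewrite sqr_sqrtr.
Qed.

Lemma hnorm_sqr x : hnorm ip x ^+ 2 = Re (ip x x).
Proof. by rewrite ip_self. Qed.

Lemma hnorm_eq0 x : hnorm ip x = 0 -> x = 0.
Proof. by case: ipP => _ _ _ ip_eq0 x0; apply: ip_eq0; rewrite ip_self x0 expr0n. Qed.

Lemma hnorm0 : hnorm ip 0 = 0.
Proof. by rewrite /hnorm ip0l sqrtr0. Qed.

Lemma hnormZ a x : hnorm ip (a *: x) = cabs a * hnorm ip x.
Proof.
apply: (pexpIrn (isT : (0 < 2)%N)); rewrite ?nnegrE ?mulr_ge0 ?cabs_ge0 ?hnorm_ge0 //.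
by rewrite exprMn hnorm_sqr ipZl ipZr ip_self cabs_sqr; case: a => a b /=; ring.
Qed.

Lemma hnormD_sqr x y :
  hnorm ip (x + y) ^+ 2 = hnorm ip x ^+ 2 + hnorm ip y ^+ 2 + 2 * Re (ip x y).
Proof.
rewrite !hnorm_sqr ipDl !ipDr [ip y x]ipC !raddfD /=.
by case: (ip x y) => a b /=; ring.
Qed.

Lemma hnorm_parallelogram x y :
  hnorm ip (x + y) ^+ 2 + hnorm ip (x - y) ^+ 2 = 2 * hnorm ip x ^+ 2 + 2 * hnorm ip y ^+ 2.
Proof.
rewrite !hnormD_sqr ipNr raddfN /= -scaleN1r hnormZ cabsN /cabs /=.
by rewrite expr0n expr1n addr0 sqrtr1 mul1r; ring.
Qed.

Lemma cabs_ip_le x y : cabs (ip x y) <= hnorm ip x * hnorm ip y.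
Proof.
have [y0|yn0] := eqVneq (hnorm ip y) 0.
  by rewrite (hnorm_eq0 y0) ip0r hnorm0 mulr0 cabs0.
set n := hnorm ip y ^+ 2; have n0 : n != 0 by rewrite expf_eq0.
(* [x + b y] is [x] minus its projection on [y]. *)
pose b := - (n^-1)%:C * ip x y.
have e : hnorm ip (x + b *: y) ^+ 2 = hnorm ip x ^+ 2 - cabs (ip x y) ^+ 2 / n.
  rewrite hnormD_sqr hnormZ ipZr exprMn !cabs_sqr -/n /b.
  by case: (ip x y) => c1 c2 /=; field.
rewrite -ler_sqr ?nnegrE ?mulr_ge0 ?cabs_ge0 ?hnorm_ge0 // exprMn -/n.
rewrite -ler_pdivrMr ?lt_def ?n0 ?sqr_ge0 // -subr_ge0 -e; exact: sqr_ge0.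
Qed.

Lemma ler_hnormD x y : hnorm ip (x + y) <= hnorm ip x + hnorm ip y.
Proof.
rewrite -ler_sqr ?nnegrE ?addr_ge0 ?hnorm_ge0 // hnormD_sqr sqrrD.
have := le_trans (ler_norm _) (le_trans (ler_normRe_cabs (ip x y)) (cabs_ip_le x y)).
lra.
Qed.

Lemma hnorm_normalize x : hnorm ip x != 0 -> hnorm ip ((hnorm ip x)^-1%:C *: x) = 1.
Proof. by move=> x0; rewrite hnormZ cabsR ger0_norm ?invr_ge0 ?hnorm_ge0 ?mulVf. Qed.

Lemma exists_norming_vector x : exists2 y, hnorm ip y <= 1 & ip x y = (hnorm ip x)%:C.
Proof.
have [x0|xn0] := eqVneq (hnorm ip x) 0; first by exists 0; rewrite ?hnorm0 ?ip0r ?x0.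
exists ((hnorm ip x)^-1%:C *: x); first by rewrite hnorm_normalize.
by rewrite ipZr conjc_real ip_self -rmorphM /= expr2 mulrA mulVf ?mul1r.
Qed.

End InnerProduct.

Section Operators.
Variables (R : realType) (H : lmodType R[i]) (ip : H -> H -> R[i]).
Hypothesis ipP : inner_product ip.
Implicit Types (T S : H -> H) (x y : H) (a : R[i]).

Definition has_adjoint T := exists S, is_adjoint ip T S.

Lemma adjP T : has_adjoint T -> is_adjoint ip T (adj ip T).
Proof.
move=> [S TS] x y; have := @xgetPex _ 0 [set z | forall x, ip (T x) y = ip x z].
by apply; exists (S y) => u; apply: TS.
Qed.

Lemma adj_unique T S : is_adjoint ip T S -> adj ip T = S.
Proof.
move=> TS; apply: funext => y; apply: (ip_ext ipP) => x.
by rewrite -(adjP (ex_intro _ S TS)) TS.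
Qed.

Lemma adj_adjoint T : has_adjoint T -> is_adjoint ip (adj ip T) T.
Proof. by move=> hT x y; rewrite (ipC ipP) -(adjP hT) -(ipC ipP). Qed.

Lemma has_adjoint_adj T : has_adjoint T -> has_adjoint (adj ip T).
Proof. by move=> hT; exists T; apply: adj_adjoint. Qed.

Lemma ip_adj_self T : has_adjoint T -> forall x, ip (adj ip T x) x = conjc (ip (T x) x).
Proof. by move=> hT x; rewrite (ipC ipP) -(adjP hT). Qed.

Lemma has_adjoint_add T S : has_adjoint T -> has_adjoint S -> has_adjoint (opadd T S).
Proof.
move=> hT hS; exists (opadd (adj ip T) (adj ip S)) => x y.
by rewrite /opadd (ipDl ipP) (ipDr ipP) (adjP hT) (adjP hS).
Qed.

Lemma has_adjoint_scale a T : has_adjoint T -> has_adjoint (opscale a T).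
Proof.
move=> hT; exists (opscale (conjc a) (adj ip T)) => x y.
by rewrite /opscale (ipZl ipP) (ipZr ipP) conjcK (adjP hT).
Qed.

Lemma adj_mul T S : has_adjoint T -> has_adjoint S ->
  adj ip (opmul T S) = opmul (adj ip S) (adj ip T).
Proof. by move=> hT hS; apply: adj_unique => x y; rewrite /opmul (adjP hT) (adjP hS). Qed.

Lemma has_adjoint_mul T S : has_adjoint T -> has_adjoint S -> has_adjoint (opmul T S).
Proof.
by move=> hT hS; exists (opmul (adj ip S) (adj ip T)) => x y; rewrite /opmul (adjP hT) (adjP hS).
Qed.

Lemma bounded_op_linear T : bounded_op ip T -> linear T.
Proof. by case. Qed.

Section LinearOp.
Variable T : H -> H.
Hypothesis T_lin : linear T.

Lemma linear_opD x y : T (x + y) = T x + T y.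
Proof. by rewrite -[x]scale1r T_lin !scale1r. Qed.

Lemma linear_op0 : T 0 = 0.
Proof. by apply/eqP; rewrite -[X in X == _](addrK (T 0)) -linear_opD addr0 subrr. Qed.

Lemma linear_opZ a x : T (a *: x) = a *: T x.
Proof. by rewrite -[a *: x]addr0 T_lin linear_op0 addr0. Qed.

End LinearOp.

Lemma bounded_opP T : bounded_op ip T ->
  exists2 M, 0 <= M & forall x, hnorm ip (T x) <= M * hnorm ip x.
Proof.
case=> _ [M TM]; exists (Num.max M 0) => [|x]; first by rewrite le_max lexx orbT.
by rewrite (le_trans (TM x)) // ler_wpM2r ?hnorm_ge0 // le_max lexx.
Qed.

Lemma bounded_op_add T S : bounded_op ip T -> bounded_op ip S -> bounded_op ip (opadd T S).
Proof.
move=> [Tl [M TM]] [Sl [N SN]]; split=> [a x y|]; first by rewrite /opadd Tl Sl scalerDr addrACA.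
by exists (M + N) => x; rewrite mulrDl (le_trans (ler_hnormD ipP _ _)) // lerD.
Qed.

Lemma bounded_op_scale a T : bounded_op ip T -> bounded_op ip (opscale a T).
Proof.
move=> [Tl [M TM]]; split=> [b x y|]; first by rewrite /opscale Tl scalerDr !scalerA mulrC.
by exists (cabs a * M) => x; rewrite /opscale (hnormZ ipP) -mulrA ler_wpM2l ?cabs_ge0.
Qed.

Lemma bounded_op_mul T S : bounded_op ip T -> bounded_op ip S -> bounded_op ip (opmul T S).
Proof.
move=> bT bS; have [M M0 TM] := bounded_opP bT; have [N N0 SN] := bounded_opP bS.
split=> [a x y|]; first by rewrite /opmul (bounded_op_linear bS) (bounded_op_linear bT).
by exists (M * N) => x; rewrite /opmul -mulrA (le_trans (TM _)) // ler_wpM2l.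
Qed.

Lemma hnorm_adj_le T M : has_adjoint T -> 0 <= M ->
  (forall x, hnorm ip (T x) <= M * hnorm ip x) -> forall y, hnorm ip (adj ip T y) <= M * hnorm ip y.
Proof.
move=> hT M0 TM y; set h := hnorm ip (adj ip T y).
(* [h^2 = <T (T^* y), y>] by adjointness, then Cauchy-Schwarz. *)
have h2 : h ^+ 2 <= M * h * hnorm ip y.
  rewrite /h (hnorm_sqr ipP) -(adjP hT) (le_trans (ler_norm _)) //.
  rewrite (le_trans (ler_normRe_cabs _)) // (le_trans (cabs_ip_le ipP _ _)) //.
  by rewrite ler_wpM2r ?hnorm_ge0.
have [h0|hn0] := eqVneq h 0; first by rewrite h0 mulr_ge0 ?hnorm_ge0.
have hp : 0 < h by rewrite lt_def hn0 hnorm_ge0.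
by rewrite -(ler_pM2l hp) -expr2 (le_trans h2) // mulrA (mulrC h).
Qed.

Lemma bounded_op_adj T : bounded_op ip T -> has_adjoint T -> bounded_op ip (adj ip T).
Proof.
move=> bT hT; have [M M0 TM] := bounded_opP bT; split=> [a x y|].
  apply: (ip_ext ipP) => u.
  by rewrite -(adjP hT) (ipDr ipP) (ipZr ipP) (ipDr ipP) (ipZr ipP) -!(adjP hT).
by exists M; apply: hnorm_adj_le.
Qed.

End Operators.

Section NumericalRadius.
Local Open Scope classical_set_scope.
Variables (R : realType) (H : lmodType R[i]) (ip : H -> H -> R[i]).
Hypothesis ipP : inner_product ip.
Implicit Types (T : H -> H) (x y u : H).
Local Notation Re := (@complex.Re R).

Lemma numrad_ge0 T : 0 <= numrad ip T.
Proof. by apply: sup_img_ge0 => x _; apply: cabs_ge0. Qed.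

Lemma crawford_ge0 T : 0 <= crawford ip T.
Proof. by apply: inf_img_ge0 => x _; apply: cabs_ge0. Qed.

Lemma opnorm_ge0 T : 0 <= opnorm ip T.
Proof. by apply: sup_img_ge0 => x _; apply: hnorm_ge0. Qed.

Section BoundedOp.
Variable T : H -> H.
Hypothesis T_bounded : bounded_op ip T.

Lemma has_ubound_opnorm : has_ubound [set hnorm ip (T x) | x in sphere1 ip].
Proof.
have [M _ TM] := bounded_opP T_bounded.
by exists M => _ [x /= x1 <-]; rewrite -[M]mulr1 -x1 TM.
Qed.

Lemma cabs_ip_self_le x : sphere1 ip x -> cabs (ip (T x) x) <= hnorm ip (T x).
Proof. by move=> /= x1; rewrite -[leRHS]mulr1 -x1 cabs_ip_le. Qed.

Lemma has_ubound_numrad : has_ubound [set cabs (ip (T x) x) | x in sphere1 ip].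
Proof. exact: has_ubound_img_le has_ubound_opnorm cabs_ip_self_le. Qed.

Lemma le_opnorm x : sphere1 ip x -> hnorm ip (T x) <= opnorm ip T.
Proof. exact: sup_img_ub has_ubound_opnorm. Qed.

Lemma le_numrad x : sphere1 ip x -> cabs (ip (T x) x) <= numrad ip T.
Proof. exact: sup_img_ub has_ubound_numrad. Qed.

Lemma numrad_le_opnorm : numrad ip T <= opnorm ip T.
Proof. exact: le_sup_img has_ubound_opnorm cabs_ip_self_le. Qed.

Lemma opnorm_ub u : hnorm ip (T u) <= opnorm ip T * hnorm ip u.
Proof.
have T_lin := bounded_op_linear T_bounded.
have [u0|un0] := eqVneq (hnorm ip u) 0.
  by rewrite (hnorm_eq0 ipP u0) linear_op0 // hnorm0 // mulr0.
have := le_opnorm (hnorm_normalize ipP un0).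
rewrite linear_opZ // (hnormZ ipP) cabsR ger0_norm ?invr_ge0 ?hnorm_ge0 //.
by rewrite mulrC ler_pdivrMr // lt_def un0 hnorm_ge0.
Qed.

Lemma numrad_ub u : cabs (ip (T u) u) <= numrad ip T * hnorm ip u ^+ 2.
Proof.
have T_lin := bounded_op_linear T_bounded.
have [u0|un0] := eqVneq (hnorm ip u) 0.
  by rewrite (hnorm_eq0 ipP u0) linear_op0 // (ip0l ipP) cabs0 mulr_ge0 ?numrad_ge0 ?sqr_ge0.
have := le_numrad (hnorm_normalize ipP un0).
rewrite linear_opZ // (ipZl ipP) (ipZr ipP) conjc_real !cabsM cabsR.
rewrite ger0_norm ?invr_ge0 ?hnorm_ge0 //.
by rewrite mulrA -expr2 exprVn mulrC ler_pdivrMr // exprn_gt0 // lt_def un0 hnorm_ge0.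
Qed.

Lemma ip_op_shift a x y : ip (T (x + a *: y)) (x + a *: y) =
  ip (T x) x + conjc a * ip (T x) y + a * ip (T y) x + a * conjc a * ip (T y) y.
Proof.
have T_lin := bounded_op_linear T_bounded.
by rewrite linear_opD // linear_opZ // (ipDl ipP) !(ipDr ipP) !(ipZl ipP) !(ipZr ipP); ring.
Qed.

Lemma polarization x y : let q u := ip (T u) u in
  4 * ip (T x) y = q (x + y) - q (x - y) + 'i%C * (q (x + 'i%C *: y) - q (x - 'i%C *: y)).
Proof.
have -> : x + y = x + 1 *: y by rewrite scale1r.
by move=> q; rewrite /q -scaleN1r -scaleNr !ip_op_shift; apply: polarization_identity.
Qed.

Lemma cabs_ip_le_numrad x y :
  cabs (ip (T x) y) <= numrad ip T * (hnorm ip x ^+ 2 + hnorm ip y ^+ 2).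
Proof.
set q := fun u => numrad ip T * hnorm ip u ^+ 2.
have sum4 : q (x + y) + q (x - y) + (q (x + 'i%C *: y) + q (x - 'i%C *: y)) =
    4 * (numrad ip T * (hnorm ip x ^+ 2 + hnorm ip y ^+ 2)).
  rewrite /q -!mulrDr !hnorm_parallelogram // (hnormZ ipP) cabs_i mul1r; ring.
rewrite -(ler_pM2l (_ : 0 < 4)) // -sum4 -(cabs_nat R 4) -cabsM.
rewrite (polarization x y) /= (le_trans (ler_cabsD _ _)) // cabsM cabs_i mul1r.
by rewrite lerD // (le_trans (ler_cabsB _ _)) // lerD // numrad_ub.
Qed.

Lemma opnorm_le_2numrad : opnorm ip T <= 2 * numrad ip T.
Proof.
apply: sup_img_le => [|x /= x1]; first by rewrite mulr_ge0 ?numrad_ge0.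
have [y y1 Txy] := exists_norming_vector ipP (T x).
rewrite -[hnorm _ _]ger0_norm ?hnorm_ge0 // -cabsR -Txy.
rewrite (le_trans (cabs_ip_le_numrad _ _)) // x1 expr1n mulrC ler_wpM2r ?numrad_ge0 //.
by rewrite -[2]/(1 + 1) lerD2l expr_le1 ?hnorm_ge0.
Qed.

Section SelfAdjoint.
Hypothesis T_sa : is_adjoint ip T T.

Lemma normRe_ip_le_numrad x y :
  2 * `|Re (ip (T x) y)| <= numrad ip T * (hnorm ip x ^+ 2 + hnorm ip y ^+ 2).
Proof.
have e : ip (T (x + y)) (x + y) - ip (T (x - y)) (x - y) = 4 * (Re (ip (T x) y))%:C.
  have -> : x + y = x + 1 *: y by rewrite scale1r.
  have Tyx : ip (T y) x = conjc (ip (T x) y) by rewrite T_sa (ipC ipP).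
  by rewrite -scaleN1r !ip_op_shift Tyx; apply: polarization_identity_re.
have := ler_cabsB (ip (T (x + y)) (x + y)) (ip (T (x - y)) (x - y)).
rewrite e cabsM cabs_nat cabsR => le4.
rewrite -(ler_pM2l (_ : 0 < 2)) // mulrA -natrM (le_trans le4) //.
rewrite (le_trans (lerD (numrad_ub _) (numrad_ub _))) // -mulrDr hnorm_parallelogram //.
by rewrite -mulrDr mulrCA.
Qed.

Lemma numrad_sa : numrad ip T = opnorm ip T.
Proof.
apply/eqP; rewrite eq_le numrad_le_opnorm /=.
apply: sup_img_le => [|x /= x1]; first exact: numrad_ge0.
have [y y1 Txy] := exists_norming_vector ipP (T x).
have := normRe_ip_le_numrad x y; rewrite Txy /= ger0_norm ?hnorm_ge0 // x1 expr1n.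
move=> /le_trans; rewrite -(ler_pM2l (_ : 0 < 2)) //; apply.
by rewrite [leRHS]mulrC ler_wpM2l ?numrad_ge0 // -[2]/(1 + 1) lerD2l expr_le1 ?hnorm_ge0.
Qed.

End SelfAdjoint.

End BoundedOp.

Lemma hnorm_adj_le_opnorm T x : bounded_op ip T -> has_adjoint ip T ->
  hnorm ip (adj ip T x) <= opnorm ip T * hnorm ip x.
Proof. by move=> bT hT; apply: (hnorm_adj_le ipP hT (opnorm_ge0 T)) => u; apply: opnorm_ub. Qed.

Lemma numrad_adj T : has_adjoint ip T -> numrad ip (adj ip T) = numrad ip T.
Proof. by move=> hT; congr sup; apply: eq_imagel => x _; rewrite (ip_adj_self ipP hT) cabsJ. Qed.

End NumericalRadius.

Section RealImaginaryParts.
Variables (R : realType) (H : lmodType R[i]) (ip : H -> H -> R[i]).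
Hypothesis ipP : inner_product ip.
Variable T : H -> H.
Hypotheses (T_bounded : bounded_op ip T) (T_adj : has_adjoint ip T).
Implicit Types (a : R[i]) (x y : H).
Local Notation Re := (@complex.Re R).
Local Notation Im := (@complex.Im R).

(* [Re T] and [Im T] are both of the form [a T + (conj a) T^*]. *)
Definition symop a : H -> H := fun x => a *: T x + conjc a *: adj ip T x.

Lemma symop_sa a : is_adjoint ip (symop a) (symop a).
Proof.
move=> x y; rewrite /symop (ipDl ipP) !(ipZl ipP) (ipDr ipP) !(ipZr ipP) conjcK.
by rewrite (adjP T_adj) (adj_adjoint ipP T_adj) addrC.
Qed.

Lemma bounded_op_symop a : bounded_op ip (symop a).
Proof.
by apply: (bounded_op_add ipP); apply: (bounded_op_scale ipP); last exact: bounded_op_adj.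
Qed.

Lemma ReOpE : ReOp ip T = symop 2^-1.
Proof.
apply: funext => x; rewrite /ReOp /symop scalerDr conjc_inv.
by congr (_ + _^-1 *: _); rewrite conjc2.
Qed.

Lemma ImOpE : ImOp ip T = symop (2 * 'i%C)^-1.
Proof.
by apply: funext => x; rewrite /ImOp /symop conjc_inv2i scalerBr scaleNr.
Qed.

Lemma ip_ReOp_self x : ip (ReOp ip T x) x = (Re (ip (T x) x))%:C.
Proof. by rewrite /ReOp (ipZl ipP) (ipDl ipP) (ip_adj_self ipP T_adj) ReJ_add mulrC. Qed.

Lemma ip_ImOp_self x : ip (ImOp ip T x) x = (Im (ip (T x) x))%:C.
Proof.
rewrite /ImOp (ipZl ipP) (ipBl ipP) (ip_adj_self ipP T_adj) ImJ_sub.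
have i0 : 'i%C != 0 :> R[i] by apply/negP => /eqP [] /eqP; rewrite oner_eq0.
have iV : 'i%C^-1 = - 'i%C :> R[i].
  by apply: (mulfI i0); rewrite mulfV // mulrN -expr2 sqr_i opprK.
by rewrite invfM iV; ring.
Qed.

End RealImaginaryParts.

Section WeightedNumericalRadius.
Local Open Scope classical_set_scope.
Variables (R : realType) (H : lmodType R[i]) (ip : H -> H -> R[i]).
Hypothesis ipP : inner_product ip.
Implicit Types (T : H -> H) (phi psi : R -> R) (t w v : R).
Local Notation Re := (@complex.Re R).
Local Notation Im := (@complex.Im R).

Lemma ip_wop_self phi psi t T : has_adjoint ip T -> forall x,
  ip (wop ip phi psi t T x) x = (phi t)%:C * ip (T x) x + (psi t)%:C * conjc (ip (T x) x).
Proof. by move=> hT x; rewrite /wop (ipDl ipP) !(ipZl ipP) (ip_adj_self ipP hT). Qed.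

Lemma wnumradE phi psi t T : has_adjoint ip T ->
  wnumrad ip phi psi t T = sup [set wabs (phi t) (psi t) (ip (T x) x) | x in sphere1 ip].
Proof. by move=> hT; congr sup; apply: eq_imagel => x _; rewrite /= ip_wop_self. Qed.

Lemma wcrawfordE phi psi t T : has_adjoint ip T ->
  wcrawford ip phi psi t T = inf [set wabs (phi t) (psi t) (ip (T x) x) | x in sphere1 ip].
Proof. by move=> hT; congr inf; apply: eq_imagel => x _; rewrite /= ip_wop_self. Qed.

Lemma has_ubound_wabs w v T : bounded_op ip T ->
  has_ubound [set wabs w v (ip (T x) x) | x in sphere1 ip].
Proof.
move=> bT; have [M MT] := has_ubound_numrad ipP bT; exists ((`|w| + `|v|) * M).
move=> _ [x x1 <-]; rewrite (le_trans (wabs_le _ _ _)) // ler_wpM2l ?addr_ge0 //.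
by apply: MT; exists x.
Qed.

Lemma bounded_op_wop phi psi t T : bounded_op ip T -> has_adjoint ip T ->
  bounded_op ip (wop ip phi psi t T).
Proof.
move=> bT hT; apply: (bounded_op_add ipP); apply: (bounded_op_scale ipP) => //.
exact: bounded_op_adj.
Qed.

Lemma wnumradDw T phi1 phi2 psi1 psi2 t : bounded_op ip T -> has_adjoint ip T ->
  wnumrad ip (addw phi1 phi2) (addw psi1 psi2) t T
    <= wnumrad ip phi1 psi1 t T + wnumrad ip phi2 psi2 t T.
Proof.
move=> bT hT; rewrite !wnumradE //.
by apply: sup_img_add => [||x _]; [by apply: has_ubound_wabs..| apply: wabsDw].
Qed.

Lemma wnumradD T S phi psi t : bounded_op ip T -> has_adjoint ip T ->
  bounded_op ip S -> has_adjoint ip S ->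
  wnumrad ip phi psi t (opadd T S) <= wnumrad ip phi psi t T + wnumrad ip phi psi t S.
Proof.
move=> bT hT bS hS; rewrite !wnumradE //; last exact: has_adjoint_add.
apply: sup_img_add => [||x _]; [by apply: has_ubound_wabs..|].
by rewrite /opadd /= (ipDl ipP) wabsDr.
Qed.

Lemma wcrawfordD T S phi psi t : bounded_op ip T -> has_adjoint ip T -> has_adjoint ip S ->
  wcrawford ip phi psi t (opadd T S) <= wnumrad ip phi psi t T + wcrawford ip phi psi t S.
Proof.
move=> bT hT hS; rewrite wnumradE // !wcrawfordE //; last exact: has_adjoint_add.
rewrite addrC -[X in X + _]mul1r; apply: inf_img_le_affine => [||x _|x x1] //.
- by apply: sup_img_ge0 => x _; apply: wabs_ge0.
- exact: wabs_ge0.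
rewrite wabs_ge0 mul1r /opadd /= (ipDl ipP) (le_trans (wabsDr _ _ _ _)) // addrC lerD2l.
exact: sup_img_ub (has_ubound_wabs _ _ bT) x1.
Qed.

Section OneOperator.
Variable T : H -> H.
Hypotheses (T_bounded : bounded_op ip T) (T_adj : has_adjoint ip T).
Variables (phi psi : R -> R) (t : R).

Lemma wnumrad_cst0l : wnumrad ip (cstw 0) psi t T = `|psi t| * numrad ip T.
Proof.
rewrite wnumradE //; under eq_imagel do rewrite wabs0l.
by apply: sup_img_scale (has_ubound_numrad ipP T_bounded) _ => // x _; apply: cabs_ge0.
Qed.

Lemma wcrawford_cst0l : wcrawford ip (cstw 0) psi t T = `|psi t| * crawford ip T.
Proof.
rewrite wcrawfordE //; under eq_imagel do rewrite wabs0l.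
by apply: inf_img_scale => // x _; apply: cabs_ge0.
Qed.

Lemma wnumrad_cst0r : wnumrad ip phi (cstw 0) t T = `|phi t| * numrad ip T.
Proof.
rewrite wnumradE //; under eq_imagel do rewrite wabs0r.
by apply: sup_img_scale (has_ubound_numrad ipP T_bounded) _ => // x _; apply: cabs_ge0.
Qed.

Lemma wcrawford_cst0r : wcrawford ip phi (cstw 0) t T = `|phi t| * crawford ip T.
Proof.
rewrite wcrawfordE //; under eq_imagel do rewrite wabs0r.
by apply: inf_img_scale => // x _; apply: cabs_ge0.
Qed.

Lemma bounded_op_ReOp : bounded_op ip (ReOp ip T).
Proof. by rewrite ReOpE //; apply: bounded_op_symop. Qed.

Lemma bounded_op_ImOp : bounded_op ip (ImOp ip T).
Proof. by rewrite ImOpE //; apply: bounded_op_symop. Qed.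

Lemma numrad_ReOp : numrad ip (ReOp ip T) = opnorm ip (ReOp ip T).
Proof. by apply: (numrad_sa ipP bounded_op_ReOp); rewrite ReOpE //; apply: symop_sa. Qed.

Lemma numrad_ImOp : numrad ip (ImOp ip T) = opnorm ip (ImOp ip T).
Proof. by apply: (numrad_sa ipP bounded_op_ImOp); rewrite ImOpE //; apply: symop_sa. Qed.

Lemma wabs_diag_ReOp x :
  wabs (phi t) (phi t) (ip (T x) x) = 2 * `|phi t| * cabs (ip (ReOp ip T x) x).
Proof. by rewrite wabs_diag (ip_ReOp_self ipP) // cabsR. Qed.

Lemma wnumrad_diag : wnumrad ip phi phi t T = 2 * `|phi t| * numrad ip (ReOp ip T).
Proof.
rewrite wnumradE //; under eq_imagel do rewrite wabs_diag_ReOp.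
by apply: sup_img_scale (has_ubound_numrad ipP bounded_op_ReOp) _ => // x _; apply: cabs_ge0.
Qed.

Lemma wcrawford_diag : wcrawford ip phi phi t T = 2 * `|phi t| * crawford ip (ReOp ip T).
Proof.
rewrite wcrawfordE //; under eq_imagel do rewrite wabs_diag_ReOp.
by apply: inf_img_scale => // x _; apply: cabs_ge0.
Qed.

Lemma wabs1N1_ImOp x : wabs 1 (-1) (ip (T x) x) = 2 * cabs (ip (ImOp ip T x) x).
Proof. by rewrite wabs1N1 (ip_ImOp_self ipP) // cabsR. Qed.

Lemma wnumrad_1N1 : wnumrad ip (cstw 1) (cstw (-1)) t T = 2 * opnorm ip (ImOp ip T).
Proof.
rewrite wnumradE // -numrad_ImOp; under eq_imagel do rewrite wabs1N1_ImOp.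
by apply: sup_img_scale (has_ubound_numrad ipP bounded_op_ImOp) _ => // x _; apply: cabs_ge0.
Qed.

Lemma wcrawford_1N1 : wcrawford ip (cstw 1) (cstw (-1)) t T = 2 * crawford ip (ImOp ip T).
Proof.
rewrite wcrawfordE //; under eq_imagel do rewrite wabs1N1_ImOp.
by apply: inf_img_scale => // x _; apply: cabs_ge0.
Qed.

Lemma wnumrad_scalei : wnumrad ip phi psi t (opscale 'i%C T) = wnumrad ip phi (oppw psi) t T.
Proof.
rewrite !wnumradE //; last exact: has_adjoint_scale.
by congr sup; apply: eq_imagel => x _; rewrite /opscale (ipZl ipP) wabs_muli.
Qed.

Lemma wnumrad_le_wnorm : wnumrad ip phi psi t T <= wnorm ip phi psi t T.
Proof. exact/(numrad_le_opnorm ipP)/bounded_op_wop. Qed.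

Lemma wnorm_le_2wnumrad : wnorm ip phi psi t T / 2 <= wnumrad ip phi psi t T.
Proof. by rewrite ler_pdivrMr // mulrC; exact/(opnorm_le_2numrad ipP)/bounded_op_wop. Qed.

Lemma wnumrad_le : wnumrad ip phi psi t T <= (`|phi t| + `|psi t|) * numrad ip T.
Proof.
rewrite wnumradE //; apply: sup_img_le => [|x x1]; first by rewrite mulr_ge0 ?addr_ge0 ?numrad_ge0.
by rewrite (le_trans (wabs_le _ _ _)) // ler_wpM2l ?addr_ge0 ?le_numrad.
Qed.

Lemma wcrawford_ge_min :
  Num.min `|phi t + psi t| `|phi t - psi t| * crawford ip T <= wcrawford ip phi psi t T.
Proof.
rewrite wcrawfordE // -inf_img_scale ?le_min ?normr_ge0 //; last by move=> x _; apply: cabs_ge0.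
by apply: le_inf_img => x _; rewrite wabs_ge_min mulr_ge0 ?le_min ?normr_ge0 ?cabs_ge0.
Qed.

Lemma wcrawford_ge_distn : `| `|phi t| - `|psi t| | * crawford ip T <= wcrawford ip phi psi t T.
Proof.
apply: le_trans wcrawford_ge_min; rewrite ler_wpM2r ?crawford_ge0 // le_min.
by rewrite ler_dist_dist andbT; have := ler_dist_dist (phi t) (- psi t); rewrite normrN opprK.
Qed.

Lemma wnumrad_sa : is_adjoint ip T T ->
  wnumrad ip phi psi t T = `|phi t + psi t| * numrad ip T.
Proof.
move=> T_sa; rewrite wnumradE //.
under eq_imagel => x _ do rewrite wabs_real -?(ipC ipP) -?T_sa //.
by apply: sup_img_scale (has_ubound_numrad ipP T_bounded) _ => // x _; apply: cabs_ge0.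
Qed.

Lemma wnumrad_adj : wnumrad ip phi psi t T = wnumrad ip psi phi t (adj ip T).
Proof.
rewrite !wnumradE //; last exact: has_adjoint_adj.
by congr sup; apply: eq_imagel => x _; rewrite (ip_adj_self ipP T_adj) wabs_conj.
Qed.

Lemma wcrawford_le :
  wcrawford ip phi psi t T <= `|phi t| * crawford ip T + `|psi t| * numrad ip T.
Proof.
rewrite wcrawfordE //; apply: inf_img_le_affine => [||x _|x x1];
  rewrite ?mulr_ge0 ?numrad_ge0 ?cabs_ge0 //.
by rewrite (le_trans (wabs_le _ _ _)) // mulrDl lerD2l ler_wpM2l ?le_numrad.
Qed.

Lemma hnorm_wop_sqr x : hnorm ip (wop ip phi psi t T x) ^+ 2 =
  phi t ^+ 2 * hnorm ip (T x) ^+ 2 + psi t ^+ 2 * hnorm ip (adj ip T x) ^+ 2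
  + 2 * (phi t * psi t) * Re (ip (T (T x)) x).
Proof.
rewrite /wop (hnormD_sqr ipP) !(hnormZ ipP) !cabsR !exprMn !real_normK ?num_real //.
rewrite (ipZl ipP) (ipZr ipP) conjc_real mulrA -rmorphM -(adjP T_adj).
by case: (ip _ _) => a b /=; ring.
Qed.

Lemma wnorm_sqr_le : wnorm ip phi psi t T ^+ 2 <=
  (`|phi t| ^+ 2 + `|psi t| ^+ 2) * opnorm ip T ^+ 2
  + `|phi t * psi t| * numrad ip (opmul T T)
  + `|phi t * psi t| * numrad ip (opmul (adj ip T) (adj ip T)).
Proof.
have TT_adj : has_adjoint ip (opmul T T) by apply: has_adjoint_mul.
have TT_bounded : bounded_op ip (opmul T T) by apply: bounded_op_mul.
rewrite -(adj_mul ipP T_adj T_adj) (numrad_adj ipP TT_adj) !real_normK ?num_real //.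
set K := _ + _; have K0 : 0 <= K.
  by rewrite /K; do 2?apply: addr_ge0; apply: mulr_ge0; rewrite ?addr_ge0 ?sqr_ge0 ?numrad_ge0.
rewrite -[K]sqr_sqrtr // ler_sqr ?nnegrE ?opnorm_ge0 ?sqrtr_ge0 //.
apply: sup_img_le => [|x x1]; first exact: sqrtr_ge0.
rewrite /= -ler_sqr ?nnegrE ?hnorm_ge0 ?sqrtr_ge0 // (sqr_sqrtr K0) hnorm_wop_sqr.
have le_opnorm_sqr u : hnorm ip u <= opnorm ip T -> hnorm ip u ^+ 2 <= opnorm ip T ^+ 2.
  by move=> le_u; rewrite ler_sqr ?nnegrE ?hnorm_ge0 ?opnorm_ge0.
have q1 := le_opnorm_sqr _ (le_opnorm T_bounded x1).
have q2 : hnorm ip (adj ip T x) ^+ 2 <= opnorm ip T ^+ 2.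
  by apply: le_opnorm_sqr; rewrite -[leRHS]mulr1 -x1 (hnorm_adj_le_opnorm ipP).
have q3 : phi t * psi t * Re (ip (T (T x)) x) <= `|phi t * psi t| * numrad ip (opmul T T).
  rewrite (le_trans (ler_norm _)) // normrM ler_wpM2l //.
  exact: le_trans (ler_normRe_cabs _) (le_numrad ipP TT_bounded x1).
have := ler_wpM2l (sqr_ge0 (phi t)) q1; have := ler_wpM2l (sqr_ge0 (psi t)) q2.
rewrite /K; lra.
Qed.

End OneOperator.
End WeightedNumericalRadius.

Theorem proposition2p1
  (R : realType) (H : lmodType R[i]) (ip : H -> H -> R[i])
  (hH : hilbert_space ip)
  (A B : H -> H) (hA : bounded_op ip A) (hB : bounded_op ip B)
  (adjA : exists As : H -> H, is_adjoint ip A As)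
  (adjB : exists Bs : H -> H, is_adjoint ip B Bs)
  (t : R) (ht0 : 0 <= t) (ht1 : t <= 1)
  (phi psi phi1 phi2 psi1 psi2 : R -> R)
  (cphi : cont01 phi) (cpsi : cont01 psi)
  (cphi1 : cont01 phi1) (cphi2 : cont01 phi2)
  (cpsi1 : cont01 psi1) (cpsi2 : cont01 psi2) :
  (* (1) *)
  (wnumrad ip (cstw 0) psi t A = `|psi t| * numrad ip A /\
   wcrawford ip (cstw 0) psi t A = `|psi t| * crawford ip A) /\
  (* (2) *)
  (wnumrad ip phi (cstw 0) t A = `|phi t| * numrad ip A /\
   wcrawford ip phi (cstw 0) t A = `|phi t| * crawford ip A) /\
  (* (3) *)
  (wnumrad ip (cstw 1) (cstw 1) t A = 2 * opnorm ip (ReOp ip A) /\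
   wcrawford ip (cstw 1) (cstw 1) t A = 2 * crawford ip (ReOp ip A)) /\
  (* (4) *)
  (wnumrad ip (cstw 1) (cstw (-1)) t A = 2 * opnorm ip (ImOp ip A) /\
   wcrawford ip (cstw 1) (cstw (-1)) t A = 2 * crawford ip (ImOp ip A)) /\
  (* (5) *)
  (wnumrad ip phi psi t (opscale 'i A) = wnumrad ip phi (oppw psi) t A) /\
  (* (6) *)
  (wnorm ip phi psi t A / 2 <= wnumrad ip phi psi t A /\
   wnumrad ip phi psi t A <= wnorm ip phi psi t A) /\
  (* (7) *)
  (wnumrad ip phi psi t A <= (`|phi t| + `|psi t|) * numrad ip A /\
   `| `|phi t| - `|psi t| | * crawford ip A <= wcrawford ip phi psi t A) /\
  (* (8) *)
  (wnumrad ip phi phi t A = 2 * `|phi t| * numrad ip (ReOp ip A) /\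
   2 * `|phi t| * numrad ip (ReOp ip A) = 2 * `|phi t| * opnorm ip (ReOp ip A)) /\
  (* (9) *)
  (wnumrad ip psi psi t A = 2 * `|psi t| * numrad ip (ReOp ip A) /\
   2 * `|psi t| * numrad ip (ReOp ip A) = 2 * `|psi t| * opnorm ip (ReOp ip A)) /\
  (* (10) *)
  (adj ip A = A ->
   wnumrad ip phi psi t A = `|phi t + psi t| * numrad ip A /\
   `|phi t + psi t| * numrad ip A = `|phi t + psi t| * opnorm ip A) /\
  (* (11) *)
  (wnumrad ip phi psi t A = wnumrad ip psi phi t (adj ip A)) /\
  (* (12) *)
  (adj ip A = A -> wnumrad ip phi psi t A = wnumrad ip psi phi t A) /\
  (* (13) *)
  (wnumrad ip phi psi t (opadd A B)
     <= wnumrad ip phi psi t A + wnumrad ip phi psi t B) /\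
  (* (14) *)
  (wcrawford ip phi psi t (opadd A B)
     <= wnumrad ip phi psi t A + wcrawford ip phi psi t B) /\
  (* (15) *)
  (wnumrad ip phi psi t (opmul A B)
     <= (`|phi t| + `|psi t|) * numrad ip (opmul A B)) /\
  (* (16) *)
  (wcrawford ip phi psi t (opmul A B)
     <= `|phi t| * crawford ip (opmul A B) + `|psi t| * numrad ip (opmul A B)) /\
  (* (17) *)
  (wnorm ip phi psi t (opmul A B) ^+ 2
     <= (`|phi t| ^+ 2 + `|psi t| ^+ 2) * opnorm ip (opmul A B) ^+ 2
        + `|phi t * psi t| * numrad ip (opmul (opmul A B) (opmul A B))
        + `|phi t * psi t| *
            numrad ip (opmul (opmul (adj ip B) (adj ip A))
                             (opmul (adj ip B) (adj ip A)))) /\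
  (* (18) *)
  (wnumrad ip (addw phi1 phi2) (addw psi1 psi2) t A
     <= wnumrad ip phi1 psi1 t A + wnumrad ip phi2 psi2 t A) /\
  (* (19) *)
  (Num.min `|phi t + psi t| `|phi t - psi t| * crawford ip A
     <= wcrawford ip phi psi t A).
Proof.
case: hH => ipP _.
have AB_bounded := bounded_op_mul hA hB.
have AB_adj := has_adjoint_mul adjA adjB.
have A_sa : adj ip A = A -> is_adjoint ip A A by move=> AA; rewrite -{2}AA; apply: adjP.
split; first by split; [exact: wnumrad_cst0l | exact: wcrawford_cst0l].
split; first by split; [exact: wnumrad_cst0r | exact: wcrawford_cst0r].
split; first by rewrite wnumrad_diag ?wcrawford_diag ?numrad_ReOp // normr1 mulr1.
split; first by split; [exact: wnumrad_1N1 | exact: wcrawford_1N1].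
split; first exact: wnumrad_scalei.
split; first by split; [exact: wnorm_le_2wnumrad | exact: wnumrad_le_wnorm].
split; first by split; [exact: wnumrad_le | exact: wcrawford_ge_distn].
split; first by rewrite wnumrad_diag ?numrad_ReOp.
split; first by rewrite wnumrad_diag ?numrad_ReOp.
split; first by move=> /A_sa sa; rewrite wnumrad_sa ?(numrad_sa ipP hA).
split; first exact: wnumrad_adj.
split; first by move=> AA; rewrite [LHS](wnumrad_adj ipP adjA) AA.
split; first exact: wnumradD.
split; first exact: wcrawfordD.
split; first exact: wnumrad_le.
split; first exact: wcrawford_le.
split; first by rewrite -(adj_mul ipP adjA adjB); apply: wnorm_sqr_le.
split; first exact: wnumradDw.
exact: wcrawford_ge_min.
Qed.
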